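(* Let $R$ be a uniparameter QNA satisfying Hypothesis (H), with $C$ as in that hypothesis. For each $k\in[1,N]\setminus C$, the quantum torus $\mathcal Q_k$ generated by $\{y_i^{\pm1}: i\in[1,N]\setminus(C\cup\{k\})\}$ contains a non-trivial central monomial $\prod_{i\in[1,N]\setminus(C\cup\{k\})}y_i^{m_i}$, i.e. one with at least one $m_i\neq0$.
   Context: ${\mathbb K}$ is a field of characteristic $0$. A quantum nilpotent algebra (QNA) is an iterated Ore extension $R={\mathbb K}[x_1][x_2;\sigma_2,\delta_2]\cdots[x_N;\sigma_N,\delta_N]$, where $R_k={\mathbb K}[x_1][x_2;\sigma_2,\delta_2]\cdots[x_k;\sigma_k,\delta_k]$ ($R_0={\mathbb K}$), $\sigma_k$ is a ${\mathbb K}$-automorphism and $\delta_k$ a $\sigma_k$-derivation of $R_{k-1}$, together with a torus $\mathcal H$ acting rationally by ${\mathbb K}$-automorphisms on $R$ with each $x_i$ an $\mathcal H$-eigenvector, such that: (i) $\sigma_k(x_j)=\lambda_{kj}x_j$ for $j<k$, with $\lambda_{kj}\in{\mathbb K}^*$; (ii) $\delta_k$ is locally nilpotent on $R_{k-1}$; (iii) for each $k$ there exist $h_k\in\mathcal H$ and $q_k\in{\mathbb K}^*$ not a root of unity such that $h_k$ acts on $R_{k-1}$ as $\sigma_k$ and $h_k\cdot x_k=q_kx_k$. It is uniparameter if there are $q\in{\mathbb K}^*$ not a root of unity and a skew-symmetric integer matrix $(a_{ij})$ with $\lambda_{kj}=q^{a_{kj}}$ for all $j<k$. The rank is $n=|\{k:\delta_k=0\}|$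 and $\mathcal H=({\mathbb K}^* )^n$ is taken maximal. Homogeneous elements are the $\mathcal H$-eigenvectors. Goodearl–Yakimov elements: there is a surjective map $\mu:[1,N]\to[1,n]$ with predecessor $p(k)=\max\{j<k:\mu(j)=\mu(k)\}$ (or $-\infty$) and successor $s(k)=\min\{j>k:\mu(j)=\mu(k)\}$ (or $+\infty$), and homogeneous elements $y_1,\ldots,y_N\in R$, uniquely determined, with $y_k=x_k$ if $p(k)=-\infty$ and $y_k=y_{p(k)}x_k-c_k$ for some $c_k\in R_{k-1}$ otherwise, such that for every $k$ the set $\{y_j:j\le k,\ s(j)>k\}$ is, up to nonzero scalars, the set of homogeneous prime elements (nonzero normal elements $p$ with $pR$ completely prime) of $R_k$. They satisfy $y_jy_i=q_{ij}y_iy_j$ with $q_{ij}$ powers of $q$; $\mathcal A_{\mathbf q}\subseteq R$ is the quantum affine space they generate and $\mathcal T_{\mathbf q}=R[y_1^{-1},\ldots,y_N^{-1}]$ the associated quantum torus. Let $\mathfrak s_{+\infty}=\{k:s(k)=+\infty\}$. The center $\operatorname{Z}(\mathcal T_{\mathbf q})$ is a Laurent polynomial ring ${\mathbb K}[z_1^{\pm1},\ldots,z_\ell^{\pm1}]$ whose generators can be chosen to be Laurent monomials in the $y_j$, $j\in\mathfrak s_{+\infty}$; for such a monomial $z$, $\operatorname{supp}z$ is the set of $j\in\mathfrak s_{+\infty}$ whose exponent in $z$ is nonzero. Hypothesis (H): there exist such monomial generators $z_1,\ldots,z_\ell$ of $\operatorname{Z}(\mathcal T_{\mathbf q})$ and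 a subset $C=\{c_1,\ldots,c_\ell\}\subseteq\mathfrak s_{+\infty}$ with $|C|=\ell$ such that for all $i\in[1,\ell]$: (H1) $z_i\in\mathcal A_{\mathbf q}$; (H2) the exponent of $y_{c_j}$ in $z_i$ is $\delta_{ij}$ for all $j$; (H3) if $|\operatorname{supp}z_i|\ge2$ then $\operatorname{supp}z_i\setminus\{c_i\}\not\subseteq\bigcup_{j\neq i}\operatorname{supp}z_j$. *)

(* Quantum nilpotent algebras (QNAs), Goodearl-Yakimov
   elements and Hypothesis (H), all living inside an ambient K-algebra T
   which plays the role of the quantum torus T_q = R[y_1^-1,...,y_N^-1].
   Indices of generators x_k, y_k run over [1,N] (nat), as in the paper. *)
From HB Require Import structures.
From mathcomp Require Import all_boot all_order all_algebra.
Set Implicit Arguments. Unset Strict Implicit. Unset Printing Implicit Defensive.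
Import Order.TTheory GRing.Theory Num.Theory.
Local Open Scope ring_scope.

Section QNADefs.
Variables (K : fieldType) (T : unitAlgType K).

Inductive subalg_gen (S : T -> Prop) : T -> Prop :=
| sg_gen t : S t -> subalg_gen S t
| sg_scal (c : K) : subalg_gen S (c%:A)
| sg_add a b : subalg_gen S a -> subalg_gen S b -> subalg_gen S (a + b)
| sg_mul a b : subalg_gen S a -> subalg_gen S b -> subalg_gen S (a * b).

Definition Rk (x : nat -> T) (k : nat) : T -> Prop :=
  subalg_gen (fun t => exists2 j, (1 <= j <= k)%N & t = x j).

Definition alg_auto_on (A : T -> Prop) (f : T -> T) : Prop :=
  [/\ forall a, A a -> A (f a),
      forall b, A b -> exists2 a, A a & f a = b &
      forall a b, A a -> A b -> f a = f b -> a = b] /\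
  [/\ forall (c : K) a b, A a -> A b -> f (c *: a + b) = c *: f a + f b,
      forall a b, A a -> A b -> f (a * b) = f a * f b &
      f 1 = 1].

Definition skew_derivation_on (A : T -> Prop) (sg d : T -> T) : Prop :=
  [/\ forall a, A a -> A (d a),
      forall (c : K) a b, A a -> A b -> d (c *: a + b) = c *: d a + d b &
      forall a b, A a -> A b -> d (a * b) = sg a * d b + d a * b].

(* R_k = R_{k-1}[x_k; sigma_k, delta_k] : R_k is generated by R_{k-1} and x_k
   (by definition of Rk), x_k r = sigma_k(r) x_k + delta_k(r) for r in R_{k-1},
   and the powers of x_k are left R_{k-1}-linearly independent. *)
Definition ore_step (x : nat -> T) (k : nat) (sg d : T -> T) : Prop :=
  [/\ alg_auto_on (Rk x k.-1) sg,
      skew_derivation_on (Rk x k.-1) sg d,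
      forall r, Rk x k.-1 r -> x k * r = sg r * x k + d r &
      forall cs : seq T, (forall r, r \in cs -> Rk x k.-1 r) ->
        \sum_(i < size cs) cs`_i * x k ^+ i = 0 -> all (fun r => r == 0) cs].

Definition not_root_of_unity (c : K) : Prop :=
  forall m : nat, (0 < m)%N -> c ^+ m != 1.

Definition torus_elt (n : nat) (h : 'I_n -> K) : Prop := forall i, h i != 0.

Definition chr (n : nat) (wi : 'I_n -> int) (h : 'I_n -> K) : K :=
  \prod_(j < n) h j ^ wi j.

Definition rational_torus_action (x : nat -> T) (N n : nat)
    (act : ('I_n -> K) -> T -> T) (w : nat -> 'I_n -> int) : Prop :=
  [/\ forall h, torus_elt h -> alg_auto_on (Rk x N) (act h),
      forall r, Rk x N r -> act (fun _ => 1) r = r,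
      forall g h r, torus_elt g -> torus_elt h -> Rk x N r ->
        act (fun j => g j * h j) r = act g (act h r) &
      forall h i, torus_elt h -> (1 <= i <= N)%N ->
        act h (x i) = chr (w i) h *: x i].

Definition uniparameter_QNA (x : nat -> T) (N : nat) (sg d : nat -> T -> T)
    (lam : nat -> nat -> K) (q : K) (a : nat -> nat -> int) (n : nat)
    (act : ('I_n -> K) -> T -> T) (w : nat -> 'I_n -> int) : Prop :=
  [/\
      forall k, (1 <= k <= N)%N -> ore_step x k (sg k) (d k),
      forall k j, (1 <= j)%N -> (j < k <= N)%N -> sg k (x j) = lam k j *: x j,
      forall k r, (1 <= k <= N)%N -> Rk x k.-1 r ->
        exists m, iter m (d k) r = 0 &
      rational_torus_action x N act w] /\
  [/\
      forall k, (1 <= k <= N)%N -> exists h, [/\ torus_elt h,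
        forall r, Rk x k.-1 r -> act h r = sg k r &
        not_root_of_unity (chr (w k) h)],
      [/\ q != 0, not_root_of_unity q,
          forall i j, a i j = - a j i &
          forall k j, (1 <= j)%N -> (j < k <= N)%N -> lam k j = q ^ a k j] &
      exists s : seq nat, [/\ uniq s, size s = n &
        forall k, k \in s <->
          ((1 <= k <= N)%N /\ forall r, Rk x k.-1 r -> d k r = 0)]].

Definition homogeneous (n : nat) (act : ('I_n -> K) -> T -> T) (t : T) : Prop :=
  t != 0 /\ forall h, torus_elt h -> exists c : K, act h t = c *: t.

(* prime element of the subalgebra A: nonzero normal element p of A such that
   the (two-sided) ideal pA = Ap of A is completely prime *)
Definition prime_elt (A : T -> Prop) (p : T) : Prop :=
  [/\ A p, p != 0 &
      forall a, A a -> exists2 b, A b & p * a = b * p] /\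
  [/\ forall a, A a -> exists2 b, A b & a * p = p * b,
      ~ (exists2 c, A c & p * c = 1) &
      forall a b, A a -> A b -> (exists2 c, A c & a * b = p * c) ->
        (exists2 c, A c & a = p * c) \/ (exists2 c, A c & b = p * c)].

(* predecessor p(k) = max{1 <= j < k : mu j = mu k}, with 0 encoding -oo *)
Definition predk (mu : nat -> nat) (k : nat) : nat :=
  last 0%N [seq j <- iota 1 k.-1 | mu j == mu k].

(* s(j) > k  (s(j) = min{j' > j : mu j' = mu j} or +oo) *)
Definition succ_gt (mu : nat -> nat) (j k : nat) : bool :=
  ~~ has (fun j' => mu j' == mu j) (iota j.+1 (k - j)).

Definition succ_inf (mu : nat -> nat) (N j : nat) : bool :=
  (1 <= j <= N)%N && succ_gt mu j N.

Definition GY_elements (x : nat -> T) (N n : nat)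
    (act : ('I_n -> K) -> T -> T) (mu : nat -> nat) (y : nat -> T) : Prop :=
  [/\ forall k, (1 <= k <= N)%N -> (1 <= mu k <= n)%N,
      forall i, (1 <= i <= n)%N -> exists2 k, (1 <= k <= N)%N & mu k = i,
      forall k, (1 <= k <= N)%N -> homogeneous act (y k),
      forall k, (1 <= k <= N)%N ->
        if predk mu k == 0%N then y k = x k
        else exists2 c, Rk x k.-1 c & y k = y (predk mu k) * x k - c &
      forall k, (1 <= k <= N)%N ->
        (forall j, (1 <= j <= k)%N -> succ_gt mu j k ->
           homogeneous act (y j) /\ prime_elt (Rk x k) (y j)) /\
        (forall p, homogeneous act p -> prime_elt (Rk x k) p ->
           exists j, exists2 c : K, [/\ (1 <= j <= k)%N, succ_gt mu j k & c != 0]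
             & p = c *: y j)].

Definition lmon (y : nat -> T) (N : nat) (m : nat -> int) : T :=
  \prod_(i <- iota 1 N) y i ^ m i.

Definition lmon_independent (y : nat -> T) (N : nat) : Prop :=
  forall (cs : seq K) (ms : seq (nat -> int)), size cs = size ms ->
    (forall t t', (t < t' < size ms)%N ->
       exists2 i, (1 <= i <= N)%N & nth (fun _ => 0) ms t i <> nth (fun _ => 0) ms t' i) ->
    \sum_(t < size cs) cs`_t *: lmon y N (nth (fun _ => 0) ms t) = 0 ->
    all (fun c => c == 0) cs.

Definition assoc_quantum_torus (x : nat -> T) (N : nat) (q : K) (y : nat -> T) : Prop :=
  [/\ forall i, (1 <= i <= N)%N -> y i \is a GRing.unit,
      forall t, subalg_gen (fun u => Rk x N u \/
                   exists2 j, (1 <= j <= N)%N & u = (y j)^-1) t,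
      exists b : nat -> nat -> int, forall i j, (1 <= i <= N)%N -> (1 <= j <= N)%N ->
        y j * y i = q ^ b i j *: (y i * y j),
      forall t, subalg_gen (fun u => exists2 j, (1 <= j <= N)%N &
                   u = y j \/ u = (y j)^-1) t &
      lmon_independent y N].

Definition central_in (A : T -> Prop) (t : T) : Prop :=
  forall u, A u -> t * u = u * t.

(* Hypothesis (H) with data: l, z_i = lmon y N (e i) for i in [1,l],
   C = {c_1,...,c_l}. *)
Definition hypothesisH (x : nat -> T) (N : nat) (mu : nat -> nat) (y : nat -> T)
    (l : nat) (e : nat -> nat -> int) (c : nat -> nat) : Prop :=
  let z i := lmon y N (e i) in
  let inS i j := succ_inf mu N j && (e i j != 0) in
  [/\
      forall i j, (1 <= i <= l)%N -> ~~ succ_inf mu N j -> e i j = 0,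
      [/\ forall i, (1 <= i <= l)%N -> central_in (fun _ => True) (z i),
          forall t, central_in (fun _ => True) t ->
            subalg_gen (fun u => exists2 i, (1 <= i <= l)%N &
                            u = z i \/ u = (z i)^-1) t &
          lmon_independent z l],
      (forall i, (1 <= i <= l)%N -> succ_inf mu N (c i)) /\
      (forall i j, (1 <= i <= l)%N -> (1 <= j <= l)%N -> c i = c j -> i = j),
      forall i, (1 <= i <= l)%N ->
        subalg_gen (fun u => exists2 j, (1 <= j <= N)%N & u = y j) (z i) &
      (forall i j, (1 <= i <= l)%N -> (1 <= j <= l)%N ->
        e i (c j) = (i == j)%:R) /\
      (forall i, (1 <= i <= l)%N ->
        (exists j1 j2, [/\ inS i j1, inS i j2 & j1 <> j2]) ->
        exists2 j, inS i j && (j != c i) &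
          forall i', (1 <= i' <= l)%N -> i' <> i -> ~~ inS i' j)].

End QNADefs.

From HB Require Import structures.
From mathcomp Require Import all_boot all_order all_algebra.
Set Implicit Arguments. Unset Strict Implicit. Unset Printing Implicit Defensive.
Import Order.TTheory GRing.Theory Num.Theory.
Local Open Scope ring_scope.

(* The y_i q-commute, y_j y_i = q^(b_ij) y_i y_j, and since q is not a root of
   unity the integer matrix b is skew-symmetric and a Laurent monomial y^v commutes
   with y_j exactly when (b v)_j = 0.  A central monomial lies in the centre of T_q,
   hence in the algebra generated by the z_t^(+-1); by linear independence of
   monomials its exponent lies in the lattice spanned by the exponents e_t of the
   z_t, and by (H2) a vector of ker b vanishing on C is therefore 0.
   Let D be the complement of C.  If x is supported on D and (b x) vanishes on D,
   then (b x)_(c_t) = (b x).e_t = -x.(b e_t) = 0 for every t, so x lies in ker b and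
   x = 0: the principal submatrix b_D is invertible.  Being skew-symmetric, it has
   even size, so b_(D \ {k}) has odd size, hence a nonzero rational kernel vector;
   clearing denominators gives the exponents m of a central monomial of Q_k. *)

Lemma mem_iota1 (N i : nat) : (i \in iota 1 N) = (1 <= i <= N)%N.
Proof. by rewrite mem_iota add1n ltnS. Qed.

Section QCommute.
Variables (K : fieldType) (T : unitAlgType K).
Implicit Types (a : K) (X Y Z : T).

Definition qcommute a X Y := X * Y = a *: (Y * X).

Lemma qcommute_sym a X Y : a != 0 -> qcommute a X Y -> qcommute a^-1 Y X.
Proof. by move=> a0 XY; rewrite /qcommute XY scalerA mulVf ?scale1r. Qed.

Lemma qcommute_eq a a' X Y : Y * X \is a GRing.unit ->
  qcommute a X Y -> qcommute a' X Y -> a = a'.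
Proof.
move=> YXu XY XY'; apply/eqP; rewrite -subr_eq0; apply: contraTT YXu => a0.
have: (a - a') *: (Y * X) = 0 by rewrite scalerBl -XY -XY' subrr.
by move/(canRL (scalerK a0)); rewrite scaler0 => ->; rewrite unitr0.
Qed.

Lemma qcommuteMl a b X Y Z :
  qcommute a X Z -> qcommute b Y Z -> qcommute (a * b) (X * Y) Z.
Proof.
move=> XZ YZ; rewrite /qcommute -mulrA YZ -scalerAr [X * (Z * Y)]mulrA XZ -scalerAl.
by rewrite scalerA mulrC -mulrA.
Qed.

Lemma qcommute_prod (I : eqType) (r : seq I) (a : I -> K) (X : I -> T) Y :
  {in r, forall i, qcommute (a i) (X i) Y} ->
  qcommute (\prod_(i <- r) a i) (\prod_(i <- r) X i) Y.
Proof.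
move=> rXY; rewrite !big_seq.
apply: (big_ind2 (fun a X => qcommute a X Y)) => //.
- by rewrite /qcommute mul1r mulr1 scale1r.
- by move=> *; apply: qcommuteMl.
Qed.

Lemma qcommuteV a X Y : a != 0 -> X \is a GRing.unit ->
  qcommute a X Y -> qcommute a^-1 X^-1 Y.
Proof.
move=> a0 Xu XY.
have YXV : Y * X^-1 = a *: (X^-1 * Y).
  by rewrite -[in LHS](mulKr Xu Y) XY -scalerAr -scalerAl !mulrA mulrK.
by rewrite /qcommute YXV scalerA mulVf ?scale1r.
Qed.

Lemma qcommuteXz a X Y (n : int) : a != 0 -> X \is a GRing.unit ->
  qcommute a X Y -> qcommute (a ^ n) (X ^ n) Y.
Proof.
move=> a0 Xu XY.
have qcommuteX m : qcommute (a ^+ m) (X ^+ m) Y.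
  elim: m => [|m IH]; first by rewrite /qcommute !expr0 mul1r mulr1 scale1r.
  by rewrite !exprS; apply: qcommuteMl.
case: n => m; first exact: qcommuteX.
by apply: qcommuteV; rewrite ?expf_neq0 ?unitrX.
Qed.

Lemma qcommuteXzr a X Y (n : int) : a != 0 -> Y \is a GRing.unit ->
  qcommute a X Y -> qcommute (a ^ n) X (Y ^ n).
Proof.
move=> a0 Yu /(qcommute_sym a0)/(qcommuteXz n _ Yu)/qcommute_sym.
by rewrite exprz_inv invr_expz opprK; apply; rewrite ?expfz_neq0 ?invr_eq0.
Qed.

End QCommute.

Lemma central_in_subalg_gen (K : fieldType) (T : unitAlgType K) (S : T -> Prop) z :
  (forall u, S u -> z * u = u * z) -> central_in (subalg_gen S) z.
Proof.
move=> Sz u; elim=> {u} [u /Sz // | c | u v _ zu _ zv | u v _ zu _ zv].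
- by rewrite -scalerAr -scalerAl mulr1 mul1r.
- by rewrite mulrDr mulrDl zu zv.
- by rewrite mulrA zu -mulrA zv mulrA.
Qed.

Section LaurentMonomials.
Variables (K : fieldType) (T : unitAlgType K) (q : K) (N : nat).
Variables (y : nat -> T) (b : nat -> nat -> int).
Local Notation inN i := (1 <= i <= N)%N.
Hypothesis q_neq0 : q != 0.
Hypothesis y_unit : forall i, inN i -> y i \is a GRing.unit.
Hypothesis y_qcommute : forall i j, inN i -> inN j -> qcommute (q ^ b i j) (y j) (y i).

Lemma monomial_qcommute (s : seq nat) (v : nat -> int) j :
  (forall i, i \in s -> inN i) -> inN j ->
  qcommute (q ^ (\sum_(i <- s) b j i * v i)) (\prod_(i <- s) y i ^ v i) (y j).
Proof.
move=> sN jN; rewrite (big_morph _ (fun m n => expfzDr m n q_neq0) (expr0z q)).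
apply: qcommute_prod => i /sN iN; rewrite -exprz_exp.
by apply: qcommuteXz; [exact: expfz_neq0 | exact: y_unit | exact: y_qcommute].
Qed.

Lemma monomial_mul (s : seq nat) (u v : nat -> int) :
  (forall i, i \in s -> inN i) -> exists c : K,
  (\prod_(i <- s) y i ^ u i) * (\prod_(i <- s) y i ^ v i) =
    c *: \prod_(i <- s) y i ^ (u i + v i).
Proof.
elim: s => [|i s IH] sN; first by exists 1; rewrite !big_nil mulr1 scale1r.
have iN : inN i by apply: sN; rewrite mem_head.
have {}sN t : t \in s -> inN t by move=> ts; apply: sN; rewrite inE ts orbT.
have [c UV] := IH sN.
set U := \prod_(t <- s) _ in UV *; set V := \prod_(t <- s) _ in UV *.
have UY := qcommuteXzr (v i) (expfz_neq0 _ q_neq0) (y_unit iN)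
  (monomial_qcommute u sN iN).
exists ((q ^ (\sum_(t <- s) b i t * u t)) ^ v i * c).
rewrite !big_cons -mulrA [U * _]mulrA UY -scalerAl -scalerAr !mulrA -mulrA UV.
by rewrite -scalerAr scalerA -exprzDr ?y_unit.
Qed.

Lemma lmon_qcommute (v : nat -> int) j : inN j ->
  qcommute (q ^ (\sum_(i <- iota 1 N) b j i * v i)) (lmon y N v) (y j).
Proof. by apply: monomial_qcommute => i; rewrite mem_iota1. Qed.

Lemma lmon_mul (u v : nat -> int) :
  exists c : K, lmon y N u * lmon y N v = c *: lmon y N (fun i => u i + v i).
Proof. by apply: monomial_mul => i; rewrite mem_iota1. Qed.

Lemma lmon_unit (v : nat -> int) : lmon y N v \is a GRing.unit.
Proof.
by apply: unitr_prod_in => i; rewrite mem_iota1 => iN _; rewrite unitrXz ?y_unit.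
Qed.

Lemma eq_lmon (u v : nat -> int) : {in iota 1 N, u =1 v} -> lmon y N u = lmon y N v.
Proof. by move=> uv; apply: eq_big_seq => i /uv ->. Qed.

Lemma lmon0 : lmon y N (fun=> 0) = 1.
Proof. by rewrite /lmon big1 // => i _; rewrite expr0z. Qed.

Lemma lmonV (u : nat -> int) :
  exists c : K, (lmon y N u)^-1 = c *: lmon y N (fun i => - u i).
Proof.
have [c uNu] := lmon_mul u (fun i => - u i).
have {}uNu : lmon y N u * lmon y N (fun i => - u i) = c%:A.
  by rewrite uNu -lmon0; congr (_ *: _); apply: eq_lmon => i _; rewrite addrN.
have c_neq0 : c != 0.
  have : (c%:A : T) \is a GRing.unit by rewrite -uNu unitrMr ?lmon_unit.
  by apply: contraTneq => ->; rewrite scale0r unitr0.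
exists c^-1; apply: (mulrI (lmon_unit u)).
by rewrite mulrV ?lmon_unit // -scalerAr uNu scalerA mulVf ?scale1r.
Qed.

Lemma lmon_central (J : nat -> Prop) (v : nat -> int) :
  (forall j, J j -> inN j) ->
  (forall j, J j -> \sum_(i <- iota 1 N) b j i * v i = 0) ->
  central_in (subalg_gen (fun u => exists2 j, J j & u = y j \/ u = (y j)^-1)) (lmon y N v).
Proof.
move=> JN Jv; apply: central_in_subalg_gen => u [j Jj yj].
have vy : GRing.comm (lmon y N v) (y j).
  by rewrite /GRing.comm (lmon_qcommute v (JN j Jj)) Jv // expr0z scale1r.
by case: yj => ->; last exact: commrV.
Qed.

Hypothesis q_free : forall s : int, q ^ s = 1 -> s = 0.

Lemma lmon_commute_sum0 (v : nat -> int) j : inN j ->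
  lmon y N v * y j = y j * lmon y N v -> \sum_(i <- iota 1 N) b j i * v i = 0.
Proof.
move=> jN vy; apply: q_free; apply: (qcommute_eq _ (lmon_qcommute v jN)).
  by rewrite unitrMr ?lmon_unit ?y_unit.
by rewrite /qcommute vy scale1r.
Qed.

Lemma qcommute_exponent_skew i j : inN i -> inN j -> b j i = - b i j.
Proof.
move=> iN jN; apply/eqP; rewrite -addr_eq0; apply/eqP/q_free.
have yiju : y i * y j \is a GRing.unit by rewrite unitrMr ?y_unit.
have := qcommute_sym (expfz_neq0 _ q_neq0) (y_qcommute jN iN).
move/(qcommute_eq yiju (y_qcommute iN jN)).
by rewrite expfzDr // => ->; rewrite mulfV ?expfz_neq0.
Qed.

End LaurentMonomials.

Lemma big_partition_undup (R : Type) (idx : R) (op : Monoid.com_law idx)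
    (I J : eqType) (r : seq I) (p : I -> J) (F : I -> R) :
  \big[op/idx]_(i <- r) F i =
  \big[op/idx]_(j <- undup (map p r)) \big[op/idx]_(i <- r | p i == j) F i.
Proof.
transitivity (\big[op/idx]_(i <- r) \big[op/idx]_(j <- undup (map p r) | p i == j) F i).
  apply: eq_big_seq => i ir.
  rewrite -big_filter (@eq_filter _ _ (pred1 (p i))) => [|j]; last exact: eq_sym.
  by rewrite filter_pred1_uniq ?undup_uniq ?mem_undup ?map_f // big_seq1.
by rewrite (exchange_big_dep predT).
Qed.

Section Exponents.
Variable N : nat.
Local Notation inN i := (1 <= i <= N)%N.

(* Exponent functions have no decidable equality; monomials are compared through
   the list of their exponents on [1, N]. *)
Definition exps (w : nat -> int) : seq int := [seq w i | i <- iota 1 N].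

Definition of_exps (s : seq int) : nat -> int := fun i => nth 0 s i.-1.

Lemma of_exps_exps w i : inN i -> of_exps (exps w) i = w i.
Proof.
case/andP=> i_gt0 iN; rewrite /of_exps (nth_map 0) ?size_iota; last first.
  by rewrite -ltnS prednK.
by rewrite nth_iota ?add1n ?prednK // -ltnS prednK.
Qed.

Lemma eq_exps u v : exps u = exps v <-> {in iota 1 N, u =1 v}.
Proof. by split=> [/eq_in_map | /eq_in_map]. Qed.

Lemma exps_of_exps w : exps (of_exps (exps w)) = exps w.
Proof. by apply/eq_exps => i; rewrite mem_iota1 => /of_exps_exps. Qed.

Lemma exps_neq u v : exps u != exps v -> exists2 i, inN i & u i <> v i.
Proof.
have [/hasP [i] | /hasPn uv] := boolP (has (fun i => u i != v i) (iota 1 N)).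
  by rewrite mem_iota1 => iN /eqP; exists i.
by case/negP; apply/eqP/eq_exps => i /uv /negPn /eqP.
Qed.

End Exponents.

Lemma lmon_notin_span (K : fieldType) (T : unitAlgType K) (N : nat) (y : nat -> T)
    (v : nat -> int) (ks : seq (seq int)) (c : seq int -> K) :
  lmon_independent y N -> uniq ks -> {in ks, forall s, exps N (of_exps s) = s} ->
  exps N v \notin ks -> lmon y N v != \sum_(s <- ks) c s *: lmon y N (of_exps s).
Proof.
move=> y_free ks_uniq ks_exps vks; apply/eqP => v_span.
suff: all (fun a => a == 0) (1 :: [seq - c s | s <- ks]) by rewrite /= oner_eq0.
apply: (y_free _ (v :: [seq of_exps s | s <- ks])) => /=; first by rewrite !size_map.
  case=> [|t] [|t'] //=; rewrite !size_map ltnS.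
    move=> t'ks; rewrite (nth_map [::]) //; apply: exps_neq.
    by rewrite ks_exps ?mem_nth //; apply: contraNneq vks => ->; rewrite mem_nth.
  move=> /andP [tt' t'ks]; have tks : (t < size ks)%N by rewrite (ltn_trans tt').
  rewrite !(nth_map [::]) //; apply: exps_neq; rewrite !ks_exps ?mem_nth //.
  by rewrite nth_uniq // neq_ltn tt'.
rewrite big_ord_recl /= scale1r v_span (big_nth [::]) big_mkord size_map -big_split.
rewrite big1 // => t _; rewrite add0n !(nth_map [::]) // scaleNr; exact: subrr.
Qed.

Section Lattice.
Variables (K : fieldType) (T : unitAlgType K) (q : K) (N : nat).
Variables (y : nat -> T) (b : nat -> nat -> int) (l : nat) (e : nat -> nat -> int).
Local Notation inN i := (1 <= i <= N)%N.
Local Notation inl t := (1 <= t <= l)%N.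
Hypothesis q_neq0 : q != 0.
Hypothesis y_unit : forall i, inN i -> y i \is a GRing.unit.
Hypothesis y_qcommute : forall i j, inN i -> inN j -> qcommute (q ^ b i j) (y j) (y i).

Definition in_lattice (w : nat -> int) : Prop :=
  exists n : nat -> int, forall j, inN j -> w j = \sum_(t <- iota 1 l) n t * e t j.

Lemma lattice_ext u v : {in iota 1 N, u =1 v} -> in_lattice u -> in_lattice v.
Proof.
move=> uv [n un]; exists n => j jN.
by rewrite -uv ?un // mem_iota1.
Qed.

Lemma lattice0 : in_lattice (fun=> 0).
Proof. by exists (fun=> 0) => j _; rewrite big1 // => t _; rewrite mul0r. Qed.

Lemma latticeD u v : in_lattice u -> in_lattice v -> in_lattice (fun i => u i + v i).
Proof.
move=> [n un] [m vm]; exists (fun t => n t + m t) => j jN.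
by rewrite un // vm // -big_split; apply: eq_bigr => t _; rewrite mulrDl.
Qed.

Lemma latticeN u : in_lattice u -> in_lattice (fun i => - u i).
Proof.
move=> [n un]; exists (fun t => - n t) => j jN.
by rewrite un // -sumrN; apply: eq_bigr => t _; rewrite mulNr.
Qed.

Lemma lattice_gen t : inl t -> in_lattice (e t).
Proof.
move=> tl; exists (fun s => (s == t)%:R) => j jN.
rewrite (bigD1_seq t) ?iota_uniq ?mem_iota1 //= eqxx mul1r.
by rewrite big1 ?addr0 // => s /negbTE ->; rewrite mul0r.
Qed.

Lemma lattice_vanish (c : nat -> nat) v :
  (forall s, inl s -> inN (c s)) ->
  (forall t s, inl t -> inl s -> e t (c s) = (t == s)%:R) ->
  in_lattice v -> (forall s, inl s -> v (c s) = 0) -> forall i, inN i -> v i = 0.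
Proof.
move=> cN ec [n vn] vc0.
have n0 s : inl s -> n s = 0.
  move=> sl; rewrite -(vc0 s sl) (vn _ (cN s sl)).
  rewrite (bigD1_seq s) ?iota_uniq ?mem_iota1 //= ec // eqxx mulr1.
  rewrite big_seq_cond big1 ?addr0 // => t /andP [].
  by rewrite mem_iota1 => tl /negbTE ts; rewrite ec // ts mulr0.
move=> i iN; rewrite vn // big_seq big1 // => t.
by rewrite mem_iota1 => tl; rewrite n0 // mul0r.
Qed.

Inductive lattice_span : T -> Prop :=
| lattice_span0 : lattice_span 0
| lattice_spanS a w x :
    in_lattice w -> lattice_span x -> lattice_span (a *: lmon y N w + x).

Lemma lattice_span_lmon w : in_lattice w -> lattice_span (lmon y N w).
Proof.
move=> wL; rewrite -[lmon _ _ _]scale1r -[_ *: _]addr0.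
by apply: lattice_spanS => //; apply: lattice_span0.
Qed.

Lemma lattice_spanD x x' : lattice_span x -> lattice_span x' -> lattice_span (x + x').
Proof.
move=> xL x'L; elim: xL => [|a w z wL _ IH]; first by rewrite add0r.
by rewrite -addrA; apply: lattice_spanS.
Qed.

Lemma lattice_spanZ a x : lattice_span x -> lattice_span (a *: x).
Proof.
elim=> [|a' w x' wL _ IH]; first by rewrite scaler0; apply: lattice_span0.
by rewrite scalerDr scalerA; apply: lattice_spanS.
Qed.

Lemma lattice_span_lmonM u x :
  in_lattice u -> lattice_span x -> lattice_span (lmon y N u * x).
Proof.
move=> uL; elim=> [|a w x' wL _ IH]; first by rewrite mulr0; apply: lattice_span0.
have [c uw] := lmon_mul q_neq0 y_unit y_qcommute u w.
by rewrite mulrDr -scalerAr uw scalerA; apply: lattice_spanS => //; apply: latticeD.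
Qed.

Lemma lattice_spanM x x' : lattice_span x -> lattice_span x' -> lattice_span (x * x').
Proof.
move=> xL x'L; elim: xL => [|a w z wL _ IH]; first by rewrite mul0r; apply: lattice_span0.
rewrite mulrDl -scalerAl; apply: lattice_spanD => //.
exact/lattice_spanZ/lattice_span_lmonM.
Qed.

Lemma subalg_gen_lattice_span x :
  subalg_gen (fun u => exists2 t, inl t &
    u = lmon y N (e t) \/ u = (lmon y N (e t))^-1) x ->
  lattice_span x.
Proof.
elim=> {x} [_ [t tl [-> | ->]] | a | x x' _ xL _ x'L | x x' _ xL _ x'L].
- exact/lattice_span_lmon/lattice_gen.
- have [c ->] := lmonV q_neq0 y_unit y_qcommute (e t).
  exact/lattice_spanZ/lattice_span_lmon/latticeN/lattice_gen.
- by rewrite -(@lmon0 _ _ N y); apply/lattice_spanZ/lattice_span_lmon/lattice0.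
- exact: lattice_spanD.
- exact: lattice_spanM.
Qed.

Lemma lattice_span_keys x : lattice_span x ->
  exists2 r : seq (K * seq int), {in r, forall p, exists2 w, in_lattice w & p.2 = exps N w}
    & x = \sum_(p <- r) p.1 *: lmon y N (of_exps p.2).
Proof.
elim=> [|a w x' wL _ [r rL ->]]; first by exists [::]; rewrite ?big_nil.
exists ((a, exps N w) :: r); last first.
  rewrite big_cons /=; congr (_ *: _ + _); apply: eq_lmon => i.
  by rewrite mem_iota1 => /of_exps_exps.
by move=> p; rewrite inE => /orP [/eqP -> | /rL]; first by exists w.
Qed.

Lemma in_lattice_of_span v :
  lmon_independent y N -> lattice_span (lmon y N v) -> in_lattice v.
Proof.
move=> y_free /lattice_span_keys [r rL vr].
have [/mapP [p pr vp] | vr'] := boolP (exps N v \in map snd r).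
  have [w wL pw] := rL p pr; apply: lattice_ext wL; apply/eq_exps.
  by rewrite -pw -vp.
have keys : {in undup (map snd r), forall s, exps N (of_exps s) = s}.
  by move=> s; rewrite mem_undup => /mapP [p /rL [w _ ->] ->]; rewrite exps_of_exps.
have vks : exps N v \notin undup (map snd r) by rewrite mem_undup.
have /negP[] := lmon_notin_span (fun s => \sum_(p <- r | p.2 == s) p.1)
  y_free (undup_uniq _) keys vks.
rewrite vr (big_partition_undup _ _ snd); apply/eqP/eq_big_seq => s _.
by rewrite scaler_suml; apply: eq_bigr => p /eqP ->.
Qed.

End Lattice.

Lemma det_skew_odd (F : fieldType) (m : nat) (M : 'M[F]_m) :
  2%:R != 0 :> F -> M^T = - M -> odd m -> \det M = 0.
Proof.
move=> two_neq0 M_skew m_odd.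
have detMN : \det M = - \det M.
  by rewrite -[LHS]det_tr M_skew -scaleN1r detZ -signr_odd m_odd expr1 mulN1r.
apply/eqP; have: 2%:R * \det M == 0 by rewrite mulr_natl mulr2n {1}detMN addNr.
by rewrite mulf_eq0 (negbTE two_neq0).
Qed.

Section PrincipalSubmatrix.
Variables (F : fieldType) (n : nat).
Implicit Types (D : {set 'I_n}) (B : 'M[F]_n).

Definition incl_mx D : 'M[F]_(n, #|D|) := colsub (@enum_val _ (mem D)) 1%:M.

Definition psubmx D B : 'M[F]_#|D| := mxsub (@enum_val _ (mem D)) enum_val B.

Lemma incl_mxT_mul D m (Y : 'M[F]_(n, m)) : (incl_mx D)^T *m Y = rowsub enum_val Y.
Proof. by rewrite trmx_mxsub trmx1 mul_rowsub_mx mul1mx. Qed.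

Lemma incl_mxTK D : (incl_mx D)^T *m incl_mx D = 1%:M.
Proof.
by rewrite incl_mxT_mul; apply/matrixP => i j; rewrite !mxE (inj_eq enum_val_inj).
Qed.

Lemma psubmxE D B : psubmx D B = (incl_mx D)^T *m B *m incl_mx D.
Proof. by rewrite incl_mxT_mul mulmx_colsub mulmx1; apply/matrixP => i j; rewrite !mxE. Qed.

Lemma psubmx_skew D B : B^T = - B -> (psubmx D B)^T = - psubmx D B.
Proof. by move=> B_skew; rewrite trmx_mxsub B_skew; apply/matrixP => i j; rewrite !mxE. Qed.

Lemma psubmx_ker D B : \det (psubmx D B) = 0 ->
  exists2 x : 'cV[F]_n, x != 0 &
    (forall t, t \notin D -> x t 0 = 0) /\ (forall u, u \in D -> (B *m x) u 0 = 0).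
Proof.
rewrite -det_tr => /eqP/det0P [v v_neq0 vP].
have Pv : psubmx D B *m v^T = 0 by rewrite -[psubmx D B]trmxK -trmx_mul vP trmx0.
exists (incl_mx D *m v^T); last split.
- apply: contra_neq v_neq0 => /(congr1 (mulmx (incl_mx D)^T)).
  by rewrite mulmxA incl_mxTK mul1mx mulmx0 => /(congr1 trmx); rewrite trmxK trmx0.
- move=> t tD; rewrite mxE big1 // => i _; rewrite !mxE.
  by case: eqP => [tDi | _]; [rewrite tDi enum_valP in tD | rewrite mul0r].
- move=> u uD; move/matrixP: Pv => /(_ (enum_rank_in uD u) 0).
  by rewrite psubmxE -!mulmxA incl_mxT_mul !mxE enum_rankK_in.
Qed.

Variable B : 'M[F]_n.
Hypothesis B_skew : B^T = - B.

Lemma det_psubmx_neq0 D :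
  (forall u, u \notin D -> exists2 E : 'cV[F]_n,
     B *m E = 0 & forall t, t \notin D -> E t 0 = (t == u)%:R) ->
  (forall x : 'cV[F]_n, B *m x = 0 -> (forall t, t \notin D -> x t 0 = 0) -> x = 0) ->
  \det (psubmx D B) != 0.
Proof.
move=> compl_ker ker_supp; apply/eqP => /psubmx_ker [x x_neq0 [xD BxD]].
case/eqP: x_neq0; apply: ker_supp xD; apply/matrixP => u j; rewrite ord1 [RHS]mxE.
have [uD | uD] := boolP (u \in D); first exact: BxD.
have [E BE Eu] := compl_ker u uD.
have : ((B *m x)^T *m E) 0 0 = 0.
  by rewrite trmx_mul B_skew mulmxN mulNmx -mulmxA BE mulmx0 oppr0 mxE.
rewrite mxE (bigD1 u) //= big1 => [|t tu]; rewrite [_^T _ _]mxE.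
  by rewrite Eu // eqxx mulr1 addr0.
have [tD | tD] := boolP (t \in D); first by rewrite BxD // mul0r.
by rewrite Eu // (negbTE tu) mulr0.
Qed.

Lemma psubmxD1_ker D k : 2%:R != 0 :> F -> \det (psubmx D B) != 0 -> k \in D ->
  exists2 x : 'cV[F]_n, x != 0 & (forall t, t \notin D :\ k -> x t 0 = 0) /\
    (forall u, u \in D :\ k -> (B *m x) u 0 = 0).
Proof.
move=> two_neq0 detD kD; apply/psubmx_ker/det_skew_odd => //; first exact: psubmx_skew.
apply: contraR detD => D_even; rewrite (det_skew_odd two_neq0 (psubmx_skew _ B_skew)) //.
by rewrite (cardsD1 k) kD add1n /= D_even.
Qed.

End PrincipalSubmatrix.

Section IntegerVectors.
Variable N : nat.
Local Notation inN i := (1 <= i <= N)%N.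

Lemma exists_ordS i : inN i -> exists t : 'I_N, i = t.+1.
Proof. by case: i => // i /andP [_ iN]; exists (Ordinal iN). Qed.

Lemma sum_iota1_ord (V : nmodType) (F : nat -> V) :
  \sum_(i <- iota 1 N) F i = \sum_(t < N) F t.+1.
Proof.
have -> : iota 1 N = index_iota 1 N.+1 by rewrite /index_iota subn1.
by rewrite big_add1 big_mkord.
Qed.

Definition colv (v : nat -> int) : 'cV[rat]_N := \col_t (v t.+1)%:~R.

Lemma mulmx_colv (b : nat -> nat -> int) (v : nat -> int) (j : 'I_N) :
  ((\matrix_(i, t) (b i.+1 t.+1)%:~R : 'M[rat]_N) *m colv v) j 0 =
  (\sum_(i <- iota 1 N) b j.+1 i * v i)%:~R.
Proof.
by rewrite sum_iota1_ord rmorph_sum mxE; apply: eq_bigr => t _; rewrite !mxE rmorphM.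
Qed.

Lemma colv_clear_den (x : 'cV[rat]_N) :
  exists2 d : rat, d != 0 & exists v : nat -> int, colv v = d *: x.
Proof.
pose w t := numq (x t 0) * \prod_(s | s != t) denq (x s 0).
exists (\prod_s denq (x s 0))%:~R.
  by rewrite intr_eq0; apply/prodf_neq0 => s _; exact: denq_neq0.
exists (fun i => if i is j.+1 then oapp w 0 (insub j) else 0).
apply/matrixP => t j; rewrite ord1 !mxE /= valK /w /= rmorphM /= numqE.
by rewrite [in RHS](bigD1 t) //= rmorphM /= -mulrA [LHS]mulrC.
Qed.

End IntegerVectors.

Section SkewKernel.
Variables (N l : nat) (b e : nat -> nat -> int) (c : nat -> nat).
Local Notation inN i := (1 <= i <= N)%N.
Local Notation inl t := (1 <= t <= l)%N.
Hypothesis b_skew : forall i j, inN i -> inN j -> b j i = - b i j.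
Hypothesis c_range : forall s, inl s -> inN (c s).
Hypothesis e_diag : forall t s, inl t -> inl s -> e t (c s) = (t == s)%:R.
Hypothesis e_ker : forall t j, inl t -> inN j -> \sum_(i <- iota 1 N) b j i * e t i = 0.
Hypothesis ker_vanish : forall v : nat -> int,
  (forall j, inN j -> \sum_(i <- iota 1 N) b j i * v i = 0) ->
  (forall s, inl s -> v (c s) = 0) -> forall i, inN i -> v i = 0.

Local Notation B := (\matrix_(i, j) (b i.+1 j.+1)%:~R : 'M[rat]_N).
(* The complement of C, the index t : 'I_N standing for t.+1. *)
Local Notation D := [set t : 'I_N | all (fun s => c s != t.+1) (iota 1 l)].

Lemma notin_compl_C (t : 'I_N) : t \notin D -> exists2 s, inl s & c s = t.+1.
Proof.
by rewrite inE => /allPn [s]; rewrite mem_iota1 negbK => sl /eqP; exists s.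
Qed.

Lemma trmx_B : B^T = - B.
Proof. by apply/matrixP => i j; rewrite !mxE b_skew /= ?ltn_ord // intrN. Qed.

Lemma mulmx_colv_eq0 v :
  (forall j, inN j -> \sum_(i <- iota 1 N) b j i * v i = 0) -> B *m colv N v = 0.
Proof.
by move=> vker; apply/matrixP => j i; rewrite ord1 mulmx_colv vker ?ltn_ord // mxE.
Qed.

Lemma mulmx_colv_eq0P v (j : 'I_N) :
  (B *m colv N v) j 0 = 0 -> \sum_(i <- iota 1 N) b j.+1 i * v i = 0.
Proof. by rewrite mulmx_colv => /eqP; rewrite intr_eq0 => /eqP. Qed.

Lemma compl_C_ker u : u \notin D ->
  exists2 E : 'cV[rat]_N, B *m E = 0 & forall t, t \notin D -> E t 0 = (t == u)%:R.
Proof.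
case/notin_compl_C => s sl csu; exists (colv N (e s)).
  by apply: mulmx_colv_eq0 => j; apply: e_ker.
move=> t /notin_compl_C [s' s'l cs't]; rewrite mxE -cs't e_diag //.
have [tu | tu] := eqVneq t u.
  by rewrite -(e_diag sl s'l) cs't tu -csu e_diag // eqxx.
case: eqP => [ss' | //]; case/eqP: tu; apply/val_inj/succn_inj.
by rewrite -cs't -csu ss'.
Qed.

Lemma rat_ker_vanish (x : 'cV[rat]_N) :
  B *m x = 0 -> (forall t, t \notin D -> x t 0 = 0) -> x = 0.
Proof.
move=> Bx xD; have [d d_neq0 [v vx]] := colv_clear_den x.
have vE (t : 'I_N) : (v t.+1)%:~R = d * x t 0 by move/matrixP: vx => /(_ t 0); rewrite !mxE.
suff v0 : colv N v = 0 by apply: (scalerI d_neq0); rewrite -vx v0 scaler0.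
apply/matrixP => t j; rewrite ord1 !mxE ker_vanish ?ltn_ord //.
  move=> _ /exists_ordS [u ->]; apply: mulmx_colv_eq0P.
  by rewrite vx -scalemxAr Bx scaler0 mxE.
move=> s sl; have [t' ct'] := exists_ordS (c_range sl).
apply/eqP; rewrite -(intr_eq0 rat) ct' vE xD ?mulr0 //.
by rewrite inE; apply/allPn; exists s; rewrite ?mem_iota1 ?ct' ?negbK.
Qed.

Lemma det_compl_C_neq0 : \det (psubmx D B) != 0.
Proof. exact: det_psubmx_neq0 trmx_B _ compl_C_ker rat_ker_vanish. Qed.

Lemma skew_int_kernel k : inN k -> all (fun s => c s != k) (iota 1 l) ->
  let inS i := [&& inN i, i != k & all (fun s => c s != i) (iota 1 l)] in
  exists m : nat -> int, [/\ exists2 i, inS i & m i != 0,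
    forall i, inN i -> ~~ inS i -> m i = 0 &
    forall j, inS j -> \sum_(i <- iota 1 N) b j i * m i = 0].
Proof.
move=> /exists_ordS [k' ->] k'C inS.
have inSE (u : 'I_N) : inS u.+1 = (u \in D :\ k') by rewrite /inS !inE /= ltn_ord eqSS.
have k'D : k' \in D by rewrite inE.
have [x /cV0Pn [t xt] [x_out x_ker]] :=
  psubmxD1_ker trmx_B (isT : 2%:R != 0 :> rat) det_compl_C_neq0 k'D.
have [d d_neq0 [m mx]] := colv_clear_den x.
have mE (u : 'I_N) : (m u.+1)%:~R = d * x u 0 by move/matrixP: mx => /(_ u 0); rewrite !mxE.
exists m; split.
- exists t.+1; first by rewrite inSE; apply: contraNT xt => /x_out ->.
  by rewrite -(intr_eq0 rat) mE mulf_neq0.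
- move=> _ /exists_ordS [u ->]; rewrite inSE => /x_out xu0.
  by apply/eqP; rewrite -(intr_eq0 rat) mE xu0 mulr0.
- move=> j jS; have [u ju] := exists_ordS (andP jS).1; rewrite ju in jS *.
  apply: mulmx_colv_eq0P; rewrite mx -scalemxAr mxE x_ker ?mulr0 //.
  by rewrite -inSE.
Qed.

End SkewKernel.

Lemma not_root_of_unity_exprz (K : fieldType) (q : K) (s : int) :
  not_root_of_unity q -> q ^ s = 1 -> s = 0.
Proof.
move=> q_nroot; case: s => [[|m] | m] // qm; have /eqP[] := q_nroot m.+1 isT.
  exact: qm.
by move/eqP: qm; rewrite invr_eq1 => /eqP.
Qed.

Theorem lemma5p1 (K : fieldType) (charK0 : [pchar K] =i pred0)
  (T : unitAlgType K) (N n : nat) (x : nat -> T) (sg d : nat -> T -> T)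
  (lam : nat -> nat -> K) (q : K) (a : nat -> nat -> int)
  (act : ('I_n -> K) -> T -> T) (w : nat -> 'I_n -> int)
  (mu : nat -> nat) (y : nat -> T)
  (hQNA : uniparameter_QNA x N sg d lam q a act w)
  (hGY : GY_elements x N act mu y)
  (hT : assoc_quantum_torus x N q y)
  (l : nat) (e : nat -> nat -> int) (c : nat -> nat)
  (hH : hypothesisH x N mu y l e c)
  (k : nat) (hk : (1 <= k <= N)%N) (hkC : all (fun i => c i != k) (iota 1 l)) :
  let inS i := [&& (1 <= i <= N)%N, i != k & all (fun t => c t != i) (iota 1 l)] in
  exists m : nat -> int,
    (exists2 i, inS i & m i != 0) /\
    central_in (subalg_gen (fun u => exists2 i, inS i & u = y i \/ u = (y i)^-1))
      (\prod_(i <- iota 1 N | inS i) y i ^ m i).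
Proof.
move=> inS.
have [_ [_ [q_neq0 q_nroot _ _] _]] := hQNA.
have q_free s := @not_root_of_unity_exprz K q s q_nroot.
have [y_unit _ [b y_qcommute] y_gen y_free] := hT.
have [_ [z_central center_gen _] [c_sinf _] _ [e_diag _]] := hH.
have c_range s : (1 <= s <= l)%N -> (1 <= c s <= N)%N by case/c_sinf/andP.
have b_skew := qcommute_exponent_skew q_neq0 y_unit y_qcommute q_free.
have e_ker t j : (1 <= t <= l)%N -> (1 <= j <= N)%N ->
    \sum_(i <- iota 1 N) b j i * e t i = 0.
  move=> tl jN; have yz := z_central t tl (y j) I.
  exact: (lmon_commute_sum0 q_neq0 y_unit y_qcommute q_free jN yz).
have ker_vanish v : (forall j, (1 <= j <= N)%N -> \sum_(i <- iota 1 N) b j i * v i = 0) ->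
    (forall s, (1 <= s <= l)%N -> v (c s) = 0) -> forall i, (1 <= i <= N)%N -> v i = 0.
  move=> vker; apply: (lattice_vanish c_range e_diag).
  apply: in_lattice_of_span y_free _.
  apply: (subalg_gen_lattice_span q_neq0 y_unit y_qcommute); apply: center_gen => u _.
  exact: lmon_central q_neq0 y_unit y_qcommute _ _ (fun j jN => jN) vker u (y_gen u).
have [m [m_neq0 m_out m_ker]] :=
  skew_int_kernel b_skew c_range e_diag e_ker ker_vanish hk hkC.
exists m; split => //.
have -> : \prod_(i <- iota 1 N | inS i) y i ^ m i = lmon y N m.
  rewrite /lmon big_mkcond; apply: eq_big_seq => i; rewrite mem_iota1 => iN.
  by case: ifPn => // /(m_out _ iN) ->; rewrite expr0z.
by apply: lmon_central q_neq0 y_unit y_qcommute _ _ _ m_ker => j /andP [].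
Qed.
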